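(* The poset $(P;\leq)$ defined below is order-isomorphic to an order component of some representable poset. Moreover, $(P;\le)$ is connected (it has a single order component).
   Context: Let $P=\{p\}\cup\{p_{i_0,\ldots,i_n}: 0\le n<\omega,\ i_0,\ldots,i_n\in\omega\}$ (all these symbols distinct). Let $\le$ be the reflexive–transitive closure of the following strict relations: (0) for all $0\le j<i<\omega$: $p<p_i<p_j$; (E) for all $r\ge 0$, all $i_0,\ldots,i_{2r}\in\omega$, all $k\le i_{2r}$ and all $i<j<\omega$: $p_{i_0,\ldots,i_{2r},i}<p_{i_0,\ldots,i_{2r},j}<p_{i_0,\ldots,i_{2r-1},k}$ (for $r=0$ the last element is $p_k$); (O) for all $r\ge0$, all $i_0,\ldots,i_{2r+1}\in\omega$, all $k\le i_{2r+1}$ and all $j<i<\omega$: $p_{i_0,\ldots,i_{2r},k}<p_{i_0,\ldots,i_{2r+1},i}<p_{i_0,\ldots,i_{2r+1},j}$. This $\le$ is a partial order on the countable set $P$. A poset is representable if it is order-isomorphic to the poset of prime ideals (ordered by inclusion) of a bounded distributive lattice, equivalently iff it carries a compact topology in which any $x\not\ge y$ are separated by a clopen down-set containing $x$ and not $y$. An order component of a poset is an equivalence class of the transitive closure of the comparability relation. *)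

From HB Require Import structures.
From mathcomp Require Import all_boot all_order.
From Stdlib Require Import Relations.
Set Implicit Arguments. Unset Strict Implicit. Unset Printing Implicit Defensive.

(* Elements of P are finite sequences of naturals:
   [::] stands for p, and a nonempty s = [:: i_0; ...; i_n] for p_{i_0,...,i_n}. *)
Definition Pt := seq nat.

Inductive gen : Pt -> Pt -> Prop :=
| gen0a (i j : nat) : j < i -> gen [::] [:: i]
| gen0b (i j : nat) : j < i -> gen [:: i] [:: j]
(* (E): s = t ++ [m] of odd length 2r+1 (so size t = 2r even), k <= m, i < j :
        p_{s,i} < p_{s,j} < p_{t,k} *)
| genEa (t : seq nat) (m k i j : nat) : ~~ odd (size t) -> k <= m -> i < j ->
    gen (rcons (rcons t m) i) (rcons (rcons t m) j)
| genEb (t : seq nat) (m k i j : nat) : ~~ odd (size t) -> k <= m -> i < j ->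
    gen (rcons (rcons t m) j) (rcons t k)
(* (O): s = t ++ [m] of even length 2r+2 (so size t = 2r+1 odd), k <= m, j < i :
        p_{t,k} < p_{s,i} < p_{s,j} *)
| genOa (t : seq nat) (m k i j : nat) : odd (size t) -> k <= m -> j < i ->
    gen (rcons t k) (rcons (rcons t m) i)
| genOb (t : seq nat) (m k i j : nat) : odd (size t) -> k <= m -> j < i ->
    gen (rcons (rcons t m) i) (rcons (rcons t m) j).

Definition Ple : Pt -> Pt -> Prop := clos_refl_trans Pt gen.

Definition comparable (T : Type) (le : T -> T -> Prop) (x y : T) : Prop :=
  le x y \/ le y x.

Definition same_component (T : Type) (le : T -> T -> Prop) (x y : T) : Prop :=
  clos_trans T (comparable le) x y.

Definition connected (T : Type) (le : T -> T -> Prop) : Prop :=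
  forall x y : T, same_component le x y.

Definition prime_ideal (d : Order.disp_t) (L : tbDistrLatticeType d)
    (I : L -> Prop) : Prop :=
  [/\ I Order.bottom,
      (forall x y : L, Order.le y x -> I x -> I y),
      (forall x y : L, I x -> I y -> I (Order.join x y)),
      ~ I Order.top &
      (forall x y : L, I (Order.meet x y) -> I x \/ I y)].

(* (Q, leQ) is representable: order-isomorphic to the prime ideals of some
   bounded distributive lattice, ordered by inclusion (ideals compared
   extensionally as sets). *)
Definition representable (Q : Type) (leQ : Q -> Q -> Prop) : Prop :=
  exists (d : Order.disp_t) (L : tbDistrLatticeType d) (g : Q -> L -> Prop),
    [/\ (forall q, prime_ideal (g q)),
        (forall q1 q2, leQ q1 q2 <-> (forall a, g q1 a -> g q2 a)),
        (forall q1 q2, (forall a, g q1 a <-> g q2 a) -> q1 = q2) &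
        (forall I : L -> Prop, prime_ideal I ->
            exists q, forall a, g q a <-> I a)].

Definition iso_to_component (A : Type) (leA : A -> A -> Prop)
    (Q : Type) (leQ : Q -> Q -> Prop) (q0 : Q) : Prop :=
  exists f : A -> Q,
    [/\ (forall x, same_component leQ q0 (f x)),
        (forall y, same_component leQ q0 y -> exists x, f x = y),
        (forall x1 x2, f x1 = f x2 -> x1 = x2) &
        (forall x1 x2, leA x1 x2 <-> leQ (f x1) (f x2))].

(* P is a tree: [[::]] is the root [p] and [rcons s i] is the i-th child of [s].
   Connectedness holds because every node is comparable with its parent.  For
   representability we embed P into the space Q = P + (infinite branches), with
   branches pairwise incomparable and incomparable with the nodes; P is then the
   order component of the root in Q.  Q is a Priestley space for the topology in
   which a node [s] has the neighbourhoods {s} u (cones of children of label >= m)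
   and a branch has the cones of its initial segments as neighbourhoods.  Then:
   - the clopen down-sets of Q form a bounded distributive lattice (a general
     construction for families of sets closed under finite unions/intersections);
   - they separate the order (explicit sets [lowset] and [cone_lowset], whose
     properties rest on how chains of generators leave cones of the tree);
   - by a compactness (König-type) argument, every prime ideal of this lattice is
     the set of clopen down-sets avoiding one point of Q;
   - a general criterion turns these three facts, together with antisymmetry
     (proved with a strictly monotone rational valuation), into representability. *)

From Pilot Require Import Defs.
From HB Require Import structures.
From mathcomp Require Import all_boot all_order ssralg ssrnum rat.
From mathcomp Require Import boolp zify.
From Stdlib Require Import Relations Classical.
Set Implicit Arguments. Unset Strict Implicit. Unset Printing Implicit Defensive.

Lemma same_component_sym (T : Type) (le : T -> T -> Prop) x y :
  same_component le x y -> same_component le y x.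
Proof.
elim=> [{}x {}y [h|h]|{}x {}y z _ ih1 _ ih2]; last exact: t_trans ih2 ih1.
  by apply: t_step; right.
by apply: t_step; left.
Qed.

Lemma same_component_map (A B : Type) (leA : A -> A -> Prop) (leB : B -> B -> Prop)
    (f : A -> B) : (forall x y, leA x y -> leB (f x) (f y)) ->
  forall x y, same_component leA x y -> same_component leB (f x) (f y).
Proof.
move=> hf x y; elim=> [{}x {}y [h|h]|{}x {}y z _ ih1 _ ih2]; last exact: t_trans ih1 ih2.
  by apply: t_step; left; apply: hf.
by apply: t_step; right; apply: hf.
Qed.

Lemma same_component_closed (T : Type) (le : T -> T -> Prop) (S : T -> Prop) :
  (forall x y, Defs.comparable le x y -> S x -> S y) ->
  forall x y, same_component le x y -> S x -> S y.
Proof. by move=> hS x y; elim=> [{}x {}y /hS //|{}x {}y z _ ih1 _ ih2 /ih1 /ih2]. Qed.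

Record setfam (T : Type) := SetFam {
  member :> (T -> Prop) -> Prop;
  member_empty : member (fun _ => False);
  member_full : member (fun _ => True);
  member_and : forall U V, member U -> member V -> member (fun x => U x /\ V x);
  member_or : forall U V, member U -> member V -> member (fun x => U x \/ V x)
}.

Fact setlat_display : Order.disp_t. Proof. exact: Order.Disp tt tt. Qed.

Section SetLattice.
Variables (T : Type) (F : setfam T).

Definition setlat := {U : T -> Prop | F U}.

Lemma setlat_ext (a b : setlat) : (forall x, sval a x <-> sval b x) -> a = b.
Proof.
case: a b => [U hU] [V hV] /= h; apply: eq_exist.
by apply: funext => x; apply: propext.
Qed.

HB.instance Definition _ := gen_eqMixin setlat.
HB.instance Definition _ := gen_choiceMixin setlat.

Definition setlat_meet (a b : setlat) : setlat :=
  exist _ _ (member_and (svalP a) (svalP b)).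
Definition setlat_join (a b : setlat) : setlat :=
  exist _ _ (member_or (svalP a) (svalP b)).
Definition setlat_le (a b : setlat) := setlat_meet a b == a.
Definition setlat_lt (a b : setlat) := (b != a) && setlat_le a b.

Lemma setlat_le_def a b : setlat_le a b = (setlat_meet a b == a). Proof. by []. Qed.
Lemma setlat_lt_def a b : setlat_lt a b = (b != a) && setlat_le a b. Proof. by []. Qed.
Lemma setlat_meetC : commutative setlat_meet.
Proof. by move=> a b; apply: setlat_ext => x /=; tauto. Qed.
Lemma setlat_joinC : commutative setlat_join.
Proof. by move=> a b; apply: setlat_ext => x /=; tauto. Qed.
Lemma setlat_meetA : associative setlat_meet.
Proof. by move=> a b c; apply: setlat_ext => x /=; tauto. Qed.
Lemma setlat_joinA : associative setlat_join.
Proof. by move=> a b c; apply: setlat_ext => x /=; tauto. Qed.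
Lemma setlat_joinKI b a : setlat_meet a (setlat_join a b) = a.
Proof. by apply: setlat_ext => x /=; tauto. Qed.
Lemma setlat_meetKU b a : setlat_join a (setlat_meet a b) = a.
Proof. by apply: setlat_ext => x /=; tauto. Qed.
Lemma setlat_meetUl : left_distributive setlat_meet setlat_join.
Proof. by move=> a b c; apply: setlat_ext => x /=; tauto. Qed.
Lemma setlat_meetxx : idempotent_op setlat_meet.
Proof. by move=> a; apply: setlat_ext => x /=; tauto. Qed.

HB.instance Definition _ := Order.isMeetJoinDistrLattice.Build setlat_display setlat
  setlat_le_def setlat_lt_def setlat_meetC setlat_joinC setlat_meetA setlat_joinA
  setlat_joinKI setlat_meetKU setlat_meetUl setlat_meetxx.

Lemma setlat_leP (a b : setlat) : reflect (forall x, sval a x -> sval b x) (Order.le a b).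
Proof.
apply: (iffP eqP) => [<- x /= [] //|h].
by apply: setlat_ext => x /=; move: (h x); tauto.
Qed.

Definition setlat_bot : setlat := exist _ _ (member_empty F).
Definition setlat_top : setlat := exist _ _ (member_full F).
Lemma setlat_bot_le (a : setlat) : Order.le setlat_bot a. Proof. by apply/setlat_leP. Qed.
Lemma setlat_le_top (a : setlat) : Order.le a setlat_top. Proof. by apply/setlat_leP. Qed.

HB.instance Definition _ := Order.hasBottom.Build setlat_display setlat setlat_bot_le.
HB.instance Definition _ := Order.hasTop.Build setlat_display setlat setlat_le_top.
End SetLattice.

(* A representability criterion: a poset is representable as soon as it
   carries a bounded distributive lattice [L] of down-sets ([mem a] is the
   down-set coded by [a]) that separates the order and such that every prime
   ideal of [L] consists of the members of [L] avoiding a single point. *)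
Section Representation.
Variables (Q : Type) (leQ : Q -> Q -> Prop) (d : Order.disp_t) (L : tbDistrLatticeType d).
Variable mem : L -> Q -> Prop.
Hypotheses (mem_meet : forall a b x, mem (Order.meet a b) x <-> mem a x /\ mem b x)
  (mem_join : forall a b x, mem (Order.join a b) x <-> mem a x \/ mem b x)
  (mem_bot : forall x, ~ mem Order.bottom x)
  (mem_top : forall x, mem Order.top x)
  (mem_down : forall a x y, leQ x y -> mem a y -> mem a x)
  (mem_sep : forall x y, ~ leQ x y -> exists a, mem a y /\ ~ mem a x)
  (leQ_antisym : forall x y, leQ x y -> leQ y x -> x = y)
  (mem_points : forall I, prime_ideal I -> exists q, forall a, ~ mem a q <-> I a).

Lemma representable_of_mem : representable leQ.
Proof.
have hle : forall q1 q2, leQ q1 q2 <-> (forall a, ~ mem a q1 -> ~ mem a q2).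
  move=> q1 q2; split=> [h a h1 h2|h]; first exact/h1/(mem_down h h2).
  apply: NNPP => /mem_sep [a [h2 h1]]; exact: h a h1 h2.
exists d, L, (fun q a => ~ mem a q); split=> //.
- move=> q; split=> [|x y /Order.MeetTheory.meet_l e hx hy|x y hx hy /mem_join []|/(_ (mem_top q))|x y h] //.
  + by apply/hx; have /mem_meet [] : mem (Order.meet y x) q by rewrite e.
  + by apply: NNPP => /not_or_and [/NNPP hx /NNPP hy]; apply/h/mem_meet.
- by move=> q1 q2 h; apply: leQ_antisym; apply/hle => a /h.
Qed.
End Representation.
Lemma prefix_rconsW (c w : seq nat) x : prefix c w -> prefix c (rcons w x).
Proof. by move=> h; apply: prefix_trans h (prefix_rcons _ _). Qed.

Lemma prefix_rconsE (c w : seq nat) x :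
  prefix c (rcons w x) -> c = rcons w x \/ prefix c w.
Proof.
move/prefixP=> [v]; case/lastP: v => [|v y]; first by rewrite cats0 => ->; left.
by rewrite -rcons_cat => /rcons_inj [-> _]; right; apply: prefix_prefix.
Qed.

Lemma prefix_split (u s : seq nat) :
  prefix u s -> s = u \/ exists i, prefix (rcons u i) s.
Proof.
move/prefixP=> [[|i v] ->]; first by left; rewrite cats0.
by right; exists i; rewrite -cat_rcons prefix_prefix.
Qed.

Lemma prefix_takeE (c s : seq nat) : prefix c s -> c = take (size c) s.
Proof. by rewrite prefixE => /eqP. Qed.

Lemma prefix_total (c1 c2 s : seq nat) :
  prefix c1 s -> prefix c2 s -> prefix c1 c2 \/ prefix c2 c1.
Proof.
move=> /prefix_takeE e1 /prefix_takeE e2.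
case: (leqP (size c1) (size c2)) => hl; [left | right].
  by rewrite prefixE {2}e1 e2 take_takel.
by rewrite prefixE {2}e2 e1 take_takel // ltnW.
Qed.

(* Every entry of a sequence is bounded by the sum of the entries of any
   extension; this bounds the labels met inside a cone. *)
Lemma prefix_digit (t s : seq nat) l : prefix (rcons t l) s -> l <= sumn s.
Proof.
move/prefixP=> [v ->]; rewrite sumn_cat sumn_rcons.
exact: leq_trans (leq_addl _ _) (leq_addr _ _).
Qed.

Definition init_seg (a : nat -> nat) (c : seq nat) : Prop := c = mkseq a (size c).

Lemma take_mkseq (a : nat -> nat) k n : take k (mkseq a n) = mkseq a (minn k n).
Proof. by rewrite /mkseq -map_take take_iota. Qed.

Lemma init_seg_mkseq a m : init_seg a (mkseq a m).
Proof. by rewrite /init_seg size_mkseq. Qed.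

Lemma init_seg_prefix a c d : prefix c d -> init_seg a d -> init_seg a c.
Proof.
move=> hcd hd; have hs := size_prefix hcd.
by rewrite /init_seg {1}(prefix_takeE hcd) hd take_mkseq (minn_idPl hs).
Qed.

Lemma prefix_init_seg a c M : init_seg a c -> size c <= M -> prefix c (mkseq a M).
Proof.
move=> hc hs; rewrite hc prefixE size_mkseq take_mkseq.
by rewrite (minn_idPl hs).
Qed.

Lemma init_seg_rcons a u : init_seg a u -> init_seg a (rcons u (a (size u))).
Proof. by rewrite /init_seg size_rcons mkseqS => <-. Qed.

Lemma init_seg_total a c1 c2 :
  init_seg a c1 -> init_seg a c2 -> prefix c1 c2 \/ prefix c2 c1.
Proof.
move=> h1 h2; apply: (@prefix_total _ _ (mkseq a (maxn (size c1) (size c2)))).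
  by apply: prefix_init_seg h1 _; rewrite leq_maxl.
by apply: prefix_init_seg h2 _; rewrite leq_maxr.
Qed.

Lemma rcons_neq_nil (s : seq nat) x : rcons s x <> [::].
Proof. by case: s. Qed.

Lemma prefix_nil (c : seq nat) : prefix c [::] -> c = [::].
Proof. by rewrite prefixs0 => /eqP. Qed.

Lemma prefix_singleton (c : seq nat) i : prefix c [:: i] -> c = [:: i] \/ c = [::].
Proof. by rewrite -[[:: i]]/(rcons [::] i) => /prefix_rconsE [->|/prefix_nil ->]; [left|right]. Qed.

Lemma Ple_ind (R : Pt -> Pt -> Prop) :
  (forall a, R a a) -> (forall a b c, R a b -> R b c -> R a c) ->
  (forall a b, gen a b -> R a b) -> forall a b, Ple a b -> R a b.
Proof. by move=> hrefl htrans hgen a b; elim=> [|x|x y z _ + _]; eauto. Qed.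

Lemma gen_Ple a b : gen a b -> Ple a b. Proof. exact: rt_step. Qed.
Lemma Ple_refl a : Ple a a. Proof. exact: rt_refl. Qed.
Lemma Ple_trans a b c : Ple a b -> Ple b c -> Ple a c. Proof. exact: rt_trans. Qed.

Lemma odd_size_rcons (t : seq nat) :
  odd (size t) -> exists t' m, t = rcons t' m /\ ~~ odd (size t').
Proof. by case/lastP: t => [|t' m] //=; rewrite size_rcons /= => h; exists t', m. Qed.

Lemma even_size_rcons (t : seq nat) : ~~ odd (size t) ->
  t = [::] \/ exists t' m, t = rcons t' m /\ odd (size t').
Proof.
case/lastP: t => [|t' m] /=; first by left.
by rewrite size_rcons /= negbK => h; right; exists t', m.
Qed.

Lemma Ple_child_odd t i : odd (size t) -> Ple (rcons t i) t.
Proof.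
case/odd_size_rcons => t' [m [-> ht]]; case: i => [|i].
  apply: (@Ple_trans _ (rcons (rcons t' m) 1)); apply: gen_Ple.
    exact: (@genEa t' m m 0 1).
  exact: (@genEb t' m m 0 1).
by apply: gen_Ple; apply: (@genEb t' m m 0 i.+1).
Qed.

Lemma Ple_child_even t i : ~~ odd (size t) -> Ple t (rcons t i).
Proof.
case/even_size_rcons => [->|[t' [m [-> ht]]]].
  case: i => [|i] /=; last by apply: gen_Ple; apply: (@gen0a i.+1 0).
  apply: (@Ple_trans _ [:: 1]); apply: gen_Ple.
    exact: (@gen0a 1 0).
  exact: (@gen0b 1 0).
case: i => [|i]; last by apply: gen_Ple; apply: (@genOa t' m m i.+1 0).
apply: (@Ple_trans _ (rcons (rcons t' m) 1)); apply: gen_Ple.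
  exact: (@genOa t' m m 1 0).
exact: (@genOb t' m m 1 0).
Qed.

Lemma Ple_sibling_odd t i j : odd (size t) -> i <= j -> Ple (rcons t i) (rcons t j).
Proof.
case/odd_size_rcons => t' [m [-> ht]]; rewrite leq_eqVlt => /predU1P [->|hij].
  exact: Ple_refl.
by apply: gen_Ple; apply: (@genEa t' m m i j).
Qed.

Lemma Ple_sibling_even t i j : ~~ odd (size t) -> j <= i -> Ple (rcons t i) (rcons t j).
Proof.
move=> ht; rewrite leq_eqVlt => /predU1P [->|hji]; first exact: Ple_refl.
case/even_size_rcons: ht => [->|[t' [m [-> ht]]]].
  by apply: gen_Ple; apply: (@gen0b i j).
by apply: gen_Ple; apply: (@genOb t' m m i j).
Qed.

(* Every node is linked to the root [p] through its ancestors, each node being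
   comparable with its parent. *)
Lemma root_component s : same_component Ple [::] s.
Proof.
elim/last_ind: s => [|t i ih]; first by apply: t_step; left; apply: Ple_refl.
apply: t_trans ih (t_step _ _ _ _ _).
by case h: (odd (size t)); [right; apply: Ple_child_odd | left; apply: Ple_child_even; rewrite h].
Qed.

Lemma Ple_connected : connected Ple.
Proof. by move=> x y; apply: t_trans (same_component_sym (root_component x)) (root_component y). Qed.

Definition ceil_even n := n + odd n.
Definition floor_even n := n - odd n.

Lemma Ple_ceil_even u y : Ple u y -> ceil_even (size u) <= ceil_even (size y).
Proof.
apply: (Ple_ind (R := fun u y => ceil_even (size u) <= ceil_even (size y))).
- by move=> a.
- by move=> a b c; apply: leq_trans.
move=> a b; case=> [i j _|i j _|t m k i j ht _ _|t m k i j ht _ _|t m k i j ht _ _|t m k i j ht _ _] //;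
  rewrite /ceil_even !size_rcons /=; move: ht; case: (odd (size t)) => //= _;
  lia.
Qed.

Lemma Ple_floor_even u y : Ple u y -> floor_even (size y) <= floor_even (size u).
Proof.
apply: (Ple_ind (R := fun u y => floor_even (size y) <= floor_even (size u))).
- by move=> a.
- by move=> a b c h1 h2; apply: leq_trans h2 h1.
move=> a b; case=> [i j _|i j _|t m k i j ht _ _|t m k i j ht _ _|t m k i j ht _ _|t m k i j ht _ _] //;
  rewrite /floor_even !size_rcons /=; move: ht; case: (odd (size t)) => //= _;
  lia.
Qed.

Lemma Ple_size_up u y : Ple u y -> size y <= (size u).+1.
Proof.
move/Ple_floor_even; rewrite /floor_even.
by have := leq_b1 (odd (size y)); lia.
Qed.

Lemma Ple_size_down u y : Ple u y -> size u <= size y + odd (size y).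
Proof. by move/Ple_ceil_even; rewrite /ceil_even; lia. Qed.

(* Antisymmetry: a rational valuation strictly increasing along the generators.
   The label [i] at depth [k] contributes [+-1/(i+1)], with sign [(-1)^k]. *)
Section Valuation.
Import GRing.Theory Num.Theory Order.TTheory.
Local Open Scope ring_scope.

Definition weight (i : nat) : rat := (i.+1%:R)^-1.

Definition valuation (s : seq nat) : rat :=
  \sum_(k < size s) (if odd k then - weight (nth 0%N s k) else weight (nth 0%N s k)).

Lemma valuation_nil : valuation [::] = 0.
Proof. by rewrite /valuation big_ord0. Qed.

Lemma valuation_rcons s i :
  valuation (rcons s i) = valuation s + (if odd (size s) then - weight i else weight i).
Proof.
rewrite /valuation size_rcons big_ord_recr /= nth_rcons ltnn eqxx; congr (_ + _).
by apply: eq_bigr => k _; rewrite nth_rcons ltn_ord.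
Qed.

Lemma weight_gt0 i : 0 < weight i.
Proof. by rewrite /weight invr_gt0 ltr0Sn. Qed.

Lemma weight_decr i j : (i < j)%N -> weight j < weight i.
Proof. by move=> h; rewrite /weight ltf_pV2 ?posrE ?ltr0Sn // ltr_nat ltnS. Qed.

Lemma weight_nonincr i j : (i <= j)%N -> weight j <= weight i.
Proof. by rewrite leq_eqVlt => /predU1P [->|/weight_decr/ltW]. Qed.

Lemma gen_valuation a z : gen a z -> valuation a < valuation z.
Proof.
case=> [i j hij|i j hij|t m k i j ht hk hij|t m k i j ht hk hij|t m k i j ht hk hij|t m k i j ht hk hij].
- by rewrite -[[:: i]]/(rcons [::] i) valuation_rcons valuation_nil add0r /= weight_gt0.
- by rewrite -[[:: i]]/(rcons [::] i) -[[:: j]]/(rcons [::] j) !valuation_rcons /= ltrD2l weight_decr.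
- by rewrite !valuation_rcons !size_rcons /= (negbTE ht) /= ltrD2l ltrN2 weight_decr.
- rewrite !valuation_rcons !size_rcons /= (negbTE ht) /= -addrA ltrD2l.
  rewrite -[weight k]addr0; apply: ler_ltD; first exact: weight_nonincr.
  by rewrite oppr_lt0 weight_gt0.
- rewrite !valuation_rcons !size_rcons /= ht /= -addrA ltrD2l.
  rewrite -[- weight k]addr0; apply: ler_ltD; first by rewrite lerN2 weight_nonincr.
  exact: weight_gt0.
- by rewrite !valuation_rcons !size_rcons /= ht /= ltrD2l weight_decr.
Qed.

Lemma Ple_anti a b : Ple a b -> Ple b a -> a = b.
Proof.
have hv : forall u v, Ple u v -> u = v \/ valuation u < valuation v.
  apply: Ple_ind => [u|u v w h1 h2|u v /gen_valuation]; [by left| |by right].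
  case: h1 h2 => [->|h1] [<-|h2]; [by left|by right|by right|].
  by right; apply: lt_trans h1 h2.
move=> /hv [//|h1] /hv [//|h2].
by have := lt_trans h1 h2; rewrite ltxx.
Qed.
End Valuation.

(* The cone of [c] in P is the set of
   extensions of [c]; these three lemmas describe the point through which a
   descending (resp. ascending) chain must pass when it leaves a cone. *)
Lemma gen_exit_cone a z c : gen a z -> prefix c z -> ~~ prefix c a -> Ple a c.
Proof.
move=> g; case: g (g) => [i j hij|i j hij|t m k i j ht hk hij|t m k i j ht hk hij|t m k i j ht hk hij|t m k i j ht hk hij] g.
- by case/prefix_singleton=> ->; [move=> _; apply: gen_Ple|rewrite prefix0s].
- by case/prefix_singleton=> ->; [move=> _; apply: gen_Ple|rewrite prefix0s].
- move=> /prefix_rconsE [->|hc]; first by move=> _; apply: gen_Ple.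
  by rewrite prefix_rconsW.
- move=> /prefix_rconsE [->|hc]; first by move=> _; apply: gen_Ple.
  by rewrite !prefix_rconsW.
- move=> /prefix_rconsE [->|/prefix_rconsE [->|hc]] hna; first exact: gen_Ple.
    exact: Ple_sibling_odd.
  by rewrite prefix_rconsW in hna.
- move=> /prefix_rconsE [->|hc]; first by move=> _; apply: gen_Ple.
  by rewrite prefix_rconsW.
Qed.

Lemma gen_exit_child_cone a z t l : gen a z -> prefix (rcons t l) z ->
  ~~ prefix (rcons t l) a ->
  Ple a t \/ (exists t' l', [/\ Ple t' t, l <= l' & prefix (rcons t' l') a]).
Proof.
case=> [i0 j0 hij|i0 j0 hij|t0 m k i0 j0 ht hk hij|t0 m k i0 j0 ht hk hij|t0 m k i0 j0 ht hk hij|t0 m k i0 j0 ht hk hij].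
- case/prefix_singleton => [|/rcons_neq_nil //]; rewrite -[[:: i0]]/(rcons [::] i0).
  by case/rcons_inj => -> _ _; left; apply: Ple_refl.
- case/prefix_singleton => [|/rcons_neq_nil //]; rewrite -[[:: j0]]/(rcons [::] j0).
  case/rcons_inj => -> -> _; right; exists [::], i0.
  by split; [apply: Ple_refl|apply: ltnW|apply: prefix_refl].
- move/prefix_rconsE => [/rcons_inj [-> ->]|hp]; last by rewrite prefix_rconsW.
  by move=> _; left; apply: Ple_child_odd; rewrite size_rcons /= ht.
- move/prefix_rconsE => [/rcons_inj [-> ->]|hp]; last by rewrite !prefix_rconsW.
  by move=> _; right; exists t0, m; split; [apply: Ple_refl| |apply: prefix_rcons].
- move/prefix_rconsE => [/rcons_inj [-> ->]|/prefix_rconsE [/rcons_inj [-> ->]|hp]].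
  + by move=> _; left; apply: Ple_sibling_odd.
  + by move=> _; left; apply: Ple_child_odd.
  + by rewrite prefix_rconsW.
- move/prefix_rconsE => [/rcons_inj [-> ->]|hp]; last by rewrite prefix_rconsW.
  move=> _; right; exists (rcons t0 m), i0.
  by split; [apply: Ple_refl|apply: ltnW|apply: prefix_refl].
Qed.

Lemma Ple_exit_tail_cone u y s i : Ple u y -> prefix (rcons s i) u ->
  (forall i', i <= i' -> ~~ prefix (rcons s i') y) -> Ple s y.
Proof.
move=> h; apply clos_rt_rt1n in h; elim: h s i => [x|x u1 z g hrest ih] s i.
  by move=> hp hc; case/negP: (hc i (leqnn i)).
have r : Ple u1 z by apply: clos_rt1n_rt.
move=> hp hc.
case: g (g) hp ih r => [i0 j0 hij|i0 j0 hij|t m k i0 j0 ht hk hij|t m k i0 j0 ht hk hij|t m k i0 j0 ht hk hij|t m k i0 j0 ht hk hij] g hp ih r.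
- by case/prefix_nil/rcons_neq_nil: hp.
- case/prefix_singleton: hp => [|/rcons_neq_nil //]; rewrite -[[:: i0]]/(rcons [::] i0).
  by case/rcons_inj => -> _; apply: Ple_trans r; apply: (@Ple_child_even [::] j0).
- move/prefix_rconsE: hp => [/rcons_inj [es ei]|hp]; last by apply: (ih _ i) => //; apply: prefix_rconsW.
  subst s i; apply: (ih _ j0 (prefix_refl _)) => i' hi'; apply: hc.
  exact: leq_trans (ltnW hij) hi'.
- move/prefix_rconsE: hp => [/rcons_inj [-> _]|/prefix_rconsE [/rcons_inj [-> _]|hp]].
  + by apply: Ple_trans r; apply: Ple_sibling_even.
  + by apply: Ple_trans r; apply: Ple_child_even.
  + by apply: (ih _ i) => //; apply: prefix_rconsW.
- move/prefix_rconsE: hp => [/rcons_inj [es ei]|hp].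
    subst s i; apply: (ih _ m); first exact: prefix_rcons.
    by move=> i' hi'; apply: hc; apply: leq_trans hk hi'.
  by apply: (ih _ i) => //; rewrite !prefix_rconsW.
- move/prefix_rconsE: hp => [/rcons_inj [-> _]|hp].
    by apply: Ple_trans r; apply: Ple_child_even; rewrite size_rcons /= ht.
  by apply: (ih _ i) => //; apply: prefix_rconsW.
Qed.

Definition Qt := (Pt + (nat -> nat))%type.

Definition leQ (x y : Qt) : Prop :=
  match x, y with
  | inl s, inl t => Ple s t
  | inr a, inr b => a = b
  | _, _ => False
  end.

Lemma leQ_anti x y : leQ x y -> leQ y x -> x = y.
Proof.
case: x => [s|a]; case: y => [t|b] //=; last by move=> ->.
by move=> h1 h2; rewrite (Ple_anti h1 h2).
Qed.

Definition in_cone (c : seq nat) (x : Qt) : Prop :=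
  match x with inl s => prefix c s | inr a => init_seg a c end.

Lemma in_cone_prefix c d x : prefix c d -> in_cone d x -> in_cone c x.
Proof. by case: x => [s|a] /= h; [apply: prefix_trans h|apply: init_seg_prefix]. Qed.

Lemma in_cone_split u x : in_cone u x -> x = inl u \/ exists i, in_cone (rcons u i) x.
Proof.
case: x => [s|a] /=; first by case/prefix_split => [->|[i h]]; [left|right; exists i].
by move/init_seg_rcons => h; right; exists (a (size u)).
Qed.

Lemma in_cone_total c1 c2 x : in_cone c1 x -> in_cone c2 x -> prefix c1 c2 \/ prefix c2 c1.
Proof. by case: x => [s|a] /=; [apply: prefix_total|apply: init_seg_total]. Qed.

Lemma in_cone_mkseq a m : in_cone (mkseq a m) (inr a).
Proof. exact: init_seg_mkseq. Qed.

Definition nbhd (x : Qt) (m : nat) (y : Qt) : Prop :=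
  match x with
  | inl s => y = inl s \/ exists2 i, m <= i & in_cone (rcons s i) y
  | inr a => in_cone (mkseq a m) y
  end.

Lemma nbhd_mono x m m' y : m <= m' -> nbhd x m' y -> nbhd x m y.
Proof.
case: x => [s|a] /= hm; first by case=> [->|[i hi h]]; [left|right; exists i => //; apply: leq_trans hi].
apply: in_cone_prefix; rewrite -(size_mkseq a m) prefix_init_seg ?size_mkseq //.
exact: init_seg_mkseq.
Qed.

Definition is_open (U : Qt -> Prop) := forall x, U x -> exists m, forall y, nbhd x m y -> U y.
Definition clopen (U : Qt -> Prop) := is_open U /\ is_open (fun x => ~ U x).
Definition downset (U : Qt -> Prop) := forall x y, leQ x y -> U y -> U x.
Definition clopen_down (U : Qt -> Prop) := downset U /\ clopen U.

Lemma open_ext U V : is_open U -> (forall x, U x <-> V x) -> is_open V.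
Proof. by move=> h e x /e /h [m hm]; exists m => y /hm /e. Qed.

Lemma open_and U V : is_open U -> is_open V -> is_open (fun x => U x /\ V x).
Proof.
move=> hU hV x [ux vx]; have [m1 h1] := hU x ux; have [m2 h2] := hV x vx.
exists (maxn m1 m2) => y hy; split.
  by apply: h1; apply: nbhd_mono hy; apply: leq_maxl.
by apply: h2; apply: nbhd_mono hy; apply: leq_maxr.
Qed.

Lemma open_or U V : is_open U -> is_open V -> is_open (fun x => U x \/ V x).
Proof.
move=> hU hV x [ux|vx]; first by have [m h] := hU x ux; exists m => y /h; left.
by have [m h] := hV x vx; exists m => y /h; right.
Qed.

Lemma clopen_and U V : clopen U -> clopen V -> clopen (fun x => U x /\ V x).
Proof.
move=> [h1 h2] [h3 h4]; split; first exact: open_and.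
by apply: (open_ext (open_or h2 h4)) => x; tauto.
Qed.

Lemma clopen_or U V : clopen U -> clopen V -> clopen (fun x => U x \/ V x).
Proof.
move=> [h1 h2] [h3 h4]; split; first exact: open_or.
by apply: (open_ext (open_and h2 h4)) => x; tauto.
Qed.

Lemma downset_of_gen U : (forall a z, gen a z -> U (inl z) -> U (inl a)) -> downset U.
Proof.
move=> hg [s|a] [t|b] //=; last by move=> ->.
by apply: (Ple_ind (R := fun s t => U (inl t) -> U (inl s))) => // > h1 h2 /h2 /h1.
Qed.

Lemma clopen_down_empty : clopen_down (fun _ => False).
Proof. by split=> //; split=> x hx //; exists 0. Qed.

Lemma clopen_down_full : clopen_down (fun _ => True).
Proof. by split=> //; split=> x hx //; exists 0. Qed.

Lemma clopen_down_and U V : clopen_down U -> clopen_down V -> clopen_down (fun x => U x /\ V x).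
Proof.
move=> [d1 c1] [d2 c2]; split; last exact: clopen_and.
by move=> x y h [u v]; split; [apply: d1 h u|apply: d2 h v].
Qed.

Lemma clopen_down_or U V : clopen_down U -> clopen_down V -> clopen_down (fun x => U x \/ V x).
Proof.
move=> [d1 c1] [d2 c2]; split; last exact: clopen_or.
by move=> x y h [u|v]; [left; apply: d1 h u|right; apply: d2 h v].
Qed.

Definition lowset (y : Pt) (n : nat) (x : Qt) : Prop :=
  (exists2 s, x = inl s & Ple s y) \/
  (exists t l, [/\ Ple t y, n <= l & in_cone (rcons t l) x]).

Lemma lowset_gen y n a z : gen a z -> lowset y n (inl z) -> lowset y n (inl a).
Proof.
move=> g [[s [<-] h]|[t [l [ht hl hz]]]].
  by left; exists a => //; apply: Ple_trans (gen_Ple g) h.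
case hpa: (prefix (rcons t l) a); first by right; exists t, l.
case: (gen_exit_child_cone g hz (negbT hpa)) => [h|[t' [l' [h1 h2 h3]]]].
  by left; exists a => //; apply: Ple_trans h ht.
right; exists t', l'; split=> //; first exact: Ple_trans h1 ht.
exact: leq_trans hl h2.
Qed.

(* [lowset y n] is open: nodes below [y] keep the children of label [>= n],
   and points of a cone keep that cone as a neighbourhood. *)
Lemma lowset_open y n : is_open (lowset y n).
Proof.
move=> x [[s -> h]|[t [l [ht hl hx]]]].
  exists n => y' [->|[i hi he]]; first by left; exists s.
  by right; exists s, i.
case: x hx => [s|a] hx.
  exists 0 => y' [->|[i _ he]]; first by right; exists t, l.
  right; exists t, l; split=> //; apply: in_cone_prefix he; exact: prefix_rconsW.
exists (size (rcons t l)) => y' hy; right; exists t, l; split=> //.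
by apply: in_cone_prefix hy; apply: prefix_init_seg.
Qed.

(* Near a node [s], leaving the set
   upwards through a child of large label would force [s] itself to lie in it
   (Ple_exit_tail_cone); near a branch, deep initial segments are too long to
   meet nodes below [y] (Ple_size_down). *)
Lemma lowset_co_open y n : is_open (fun x => ~ lowset y n x).
Proof.
move=> [s|a] hx.
  exists (sumn y).+1 => y' [->//|[i hi he]] hD; apply: hx.
  have far : forall i', i <= i' -> ~~ prefix (rcons s i') y.
    move=> i' hi'; apply/negP => /prefix_digit hd.
    by have := leq_trans hi hi'; rewrite ltnNge hd.
  case: hD => [[u e hu]|[t [l [ht hl he']]]].
    by subst y'; left; exists s => //; apply: Ple_exit_tail_cone hu he far.
  case: (in_cone_total he he') => /prefix_rconsE.
    case=> [/rcons_inj [e _]|hp]; first by subst t; left; exists s.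
    by left; exists s => //; apply: Ple_exit_tail_cone ht hp far.
  case=> [/rcons_inj [e _]|hp]; first by subst t; left; exists s.
  by right; exists t, l.
exists (size y + odd (size y)).+2 => y' hy hD; apply: hx.
case: hD => [[u e hu]|[t [l [ht hl he']]]].
  subst y'; have := size_prefix hy; rewrite size_mkseq => h1.
  by have := leq_trans h1 (Ple_size_down hu); rewrite ltnNge leqW.
case: (in_cone_total hy he') => hp.
  have := size_prefix hp; rewrite size_mkseq size_rcons ltnS => h1.
  by have := leq_trans h1 (Ple_size_down ht); rewrite ltnn.
by right; exists t, l; split=> //; apply: (in_cone_prefix hp); apply: in_cone_mkseq.
Qed.

Lemma lowset_clopen_down y n : clopen_down (lowset y n).
Proof.
split; last by split; [apply: lowset_open|apply: lowset_co_open].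
by apply: downset_of_gen => a z; apply: lowset_gen.
Qed.

(* Cones are clopen: outside a cone, a large label or a long initial segment
   avoids it. *)
Lemma cone_clopen c : clopen (in_cone c).
Proof.
split=> [[s|a] hx|[s|a] hx].
- by exists 0 => y' [->//|[i _ he]]; apply: in_cone_prefix he; apply: prefix_rconsW.
- by exists (size c) => y' hy; apply: in_cone_prefix hy; apply: prefix_init_seg.
- exists (sumn c).+1 => y' [->//|[i hi he]] hc.
  case: (in_cone_total hc he) => [/prefix_rconsE [e|hp]|hp].
  + have := @prefix_digit s c i; rewrite -e prefix_refl => /(_ isT).
    by move/(leq_trans hi); rewrite ltnn.
  + by apply: hx.
  + by have := leq_trans hi (prefix_digit hp); rewrite ltnn.
- exists (size c) => y' hy hc; apply: hx.
  case: (in_cone_total hc hy) => hp; first exact: init_seg_prefix hp (init_seg_mkseq _ _).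
  by rewrite /= /init_seg (prefix_takeE hp) size_mkseq take_size.
Qed.

(* [cone_lowset c n] adds the cone of [c] to [lowset c n]; a descending chain
   leaving the cone passes below [c] (gen_exit_cone), so this is a down-set. *)
Definition cone_lowset (c : seq nat) (n : nat) (x : Qt) : Prop :=
  in_cone c x \/ lowset c n x.

Lemma cone_lowset_clopen_down c n : clopen_down (cone_lowset c n).
Proof.
split; last exact: clopen_or (cone_clopen c) (proj2 (lowset_clopen_down c n)).
apply: downset_of_gen => a z g [hz|hz]; last by right; apply: lowset_gen g hz.
case hca: (prefix c a); first by left.
by right; left; exists a => //; apply: gen_exit_cone g hz (negbT hca).
Qed.

(* Labels met by [lowset y n] along a branch [a] are bounded in terms of [a]:
   such a label sits at depth at most [ceil_even (size y)] (Ple_size_down). *)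
Definition branch_bound (y : Pt) (a : nat -> nat) : nat :=
  sumn (mkseq a (size y + odd (size y)).+1).

Lemma lowset_branch y n a : branch_bound y a < n -> ~ lowset y n (inr a).
Proof.
move=> hn [[s //]|[t [l [ht hl he]]]].
have hl' : l <= branch_bound y a.
  apply: prefix_digit; apply: prefix_init_seg he _.
  by rewrite size_rcons ltnS; apply: Ple_size_down ht.
by have := leq_trans hn (leq_trans hl hl'); rewrite ltnn.
Qed.

(* A node [t] is separated from any [x] not below it by [lowset t n], with [n]
   beyond the labels met along [x]. *)
Lemma separate_node x t : ~ leQ x (inl t) ->
  exists U, [/\ clopen_down U, U (inl t) & ~ U x].
Proof.
have t_in n : lowset t n (inl t) by left; exists t => //; apply: Ple_refl.
case: x => [s|a] hn.
  exists (lowset t (sumn s).+1); split=> //; first exact: lowset_clopen_down.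
  case=> [[s' [<-] //]|[t' [l [ht hl he]]]].
  by have := leq_trans hl (prefix_digit he); rewrite ltnn.
exists (lowset t (branch_bound t a).+1); split=> //; first exact: lowset_clopen_down.
exact: lowset_branch.
Qed.

(* A branch is separated from a node [s] by the down-closure [cone_lowset] of a
   cone of depth [size s + 2], which by the depth bounds cannot reach [s]. *)
Lemma separate_branch_node b s :
  exists U, [/\ clopen_down U, U (inr b) & ~ U (inl s)].
Proof.
exists (cone_lowset (mkseq b (size s).+2) 0); split.
- exact: cone_lowset_clopen_down.
- by left; apply: in_cone_mkseq.
case=> [/size_prefix|[[s' [<-] /Ple_size_up]|[t [l [/Ple_size_up ht _ /size_prefix]]]]];
  rewrite ?size_mkseq ?size_rcons.
- by rewrite ltnNge leqnSn.
- by rewrite ltnn.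
- by rewrite size_mkseq ltnS in ht; move/(ltn_trans ht); rewrite ltnn.
Qed.

(* Distinct branches are separated by [cone_lowset] of an initial segment of [b]
   on which [a] differs from [b], with a label bound beyond [a]. *)
Lemma separate_branches a b : a <> b ->
  exists U, [/\ clopen_down U, U (inr b) & ~ U (inr a)].
Proof.
move=> hab; have [p hp] : exists p, a p <> b p.
  by apply: not_all_ex_not => h; apply: hab; apply: funext.
set c := mkseq b p.+1.
exists (cone_lowset c (branch_bound c a).+1); split.
- exact: cone_lowset_clopen_down.
- by left; apply: in_cone_mkseq.
case=> [/= he|]; last exact: lowset_branch.
apply: hp; have := congr1 (fun s => nth 0 s p) he.
by rewrite /c size_mkseq !nth_mkseq.
Qed.

Lemma separation x y : ~ leQ x y -> exists U, [/\ clopen_down U, U y & ~ U x].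
Proof.
case: y => [t|b]; first exact: separate_node.
case: x => [s|a] hn; first exact: separate_branch_node.
by apply: separate_branches => e; apply: hn; rewrite /= e.
Qed.

Definition clopen_downs : setfam Qt :=
  SetFam clopen_down_empty clopen_down_full clopen_down_and clopen_down_or.

Local Notation CD := (setlat clopen_downs).

Fixpoint choice_path (c : seq nat -> nat) (k : nat) : seq nat :=
  if k is k'.+1 then rcons (choice_path c k') (c (choice_path c k')) else [::].

Lemma choice_path_mkseq c k : choice_path c k = mkseq (fun j => c (choice_path c j)) k.
Proof. by elim: k => [|k ih] //=; rewrite mkseqS -ih. Qed.

(* With [filt] the complementary prime filter, we look for
   a point lying in every member of the filter and in no other set.  Call a node
   witnessed when every difference [U \ V] ([U] in the filter, [V] not) meets
   its cone.  The root is witnessed; from a witnessed node which is not itself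
   the point, openness and the finite intersection property produce a witnessed
   child; so either some node is the point, or an infinite path of witnessed
   nodes converges to a branch which is the point. *)
Section PrimeIdealsArePoints.
Variable I : CD -> Prop.
Hypothesis hI : prime_ideal I.

Let filt (U : CD) := ~ I U.

Lemma filt_top : filt Order.top. Proof. by case: hI. Qed.
Lemma filt_bot : ~ filt Order.bottom. Proof. by case: hI => h _ _ _ _; apply. Qed.
Lemma filt_meet U V : filt U -> filt V -> filt (Order.meet U V).
Proof. by case: hI => _ _ _ _ hp hU hV /hp []. Qed.
Lemma filt_join U V : ~ filt U -> ~ filt V -> ~ filt (Order.join U V).
Proof. by case: hI => _ _ hj _ _ /NNPP hU /NNPP hV; apply; apply: hj. Qed.

Definition witnessed (u : seq nat) := forall U V : CD, filt U -> ~ filt V ->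
  exists x, [/\ in_cone u x, sval U x & ~ sval V x].

Definition filter_point (q : Qt) :=
  forall U V : CD, filt U -> ~ filt V -> sval U q /\ ~ sval V q.

(* The root is witnessed: [U] is not included in [V], as [filt] is up-closed. *)
Lemma witnessed_nil : witnessed [::].
Proof.
move=> U V hU hV; apply: NNPP => hn; apply: hV.
have hUV : Order.le U V.
  apply/setlat_leP => x hx; apply: NNPP => hnv; apply: hn; exists x; split=> //.
  by case: x {hx hnv} => [s|a] /=; [apply: prefix0s|].
by case: hI => _ hdown _ _ _; move/(hdown _ _ hUV).
Qed.

Lemma unwitnessed_children u k : (forall i, ~ witnessed (rcons u i)) ->
  exists U V, [/\ filt U, ~ filt V &
    forall i x, i < k -> in_cone (rcons u i) x -> ~ (sval U x /\ ~ sval V x)].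
Proof.
move=> hn; elim: k => [|k [U [V [hU hV h]]]].
  by exists Order.top, Order.bottom; split; [apply: filt_top|apply: filt_bot|].
have [Uk [Vk hk]] : exists Uk Vk, [/\ filt Uk, ~ filt Vk &
    forall x, in_cone (rcons u k) x -> ~ (sval Uk x /\ ~ sval Vk x)].
  move: (hn k); rewrite /witnessed => /not_all_ex_not [Uk /not_all_ex_not [Vk hk]].
  exists Uk, Vk; split; [tauto|tauto|move=> x hx [h1 h2]].
  by apply: hk => _ _; exists x.
case: hk => hUk hVk hk.
exists (Order.meet U Uk), (Order.join V Vk); split; [exact: filt_meet|exact: filt_join|].
move=> i x; rewrite ltnS leq_eqVlt => /predU1P [->|hi] he [[hx1 hx2] hx3].
  by apply: (hk x he); split=> // h0; apply: hx3; right.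
by apply: (h i x hi he); split=> // h0; apply: hx3; left.
Qed.

(* A witnessed node is a filter point or has a witnessed child: otherwise, using
   that the complement of [U0 \ V0] is open at [u], finitely many children and a
   neighbourhood of [u] cover the cone of [u] without meeting some [U \ V]. *)
Lemma witnessed_step u : witnessed u -> filter_point (inl u) \/ exists i, witnessed (rcons u i).
Proof.
move=> hu; case: (classic (exists i, witnessed (rcons u i))) => [|hn]; first by right.
left; apply: NNPP => hg.
have {}hn i : ~ witnessed (rcons u i) by move=> hi; apply: hn; exists i.
move: hg; rewrite /filter_point => /not_all_ex_not [U0 /not_all_ex_not [V0 hw]].
have hU0 : filt U0 by tauto.
have hV0 : ~ filt V0 by tauto.
have hq : ~ (sval U0 (inl u) /\ ~ sval V0 (inl u)) by tauto.
have [_ [_ closedU0]] := svalP U0; have [_ [openV0 _]] := svalP V0.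
have open_out : is_open (fun x => ~ (sval U0 x /\ ~ sval V0 x)).
  apply: (open_ext (open_or closedU0 openV0)) => x; split; first tauto.
  by case: (classic (sval U0 x)) => h1 h; [right; apply: NNPP => h2; apply: h|left].
have [m hm] := open_out _ hq.
have [U [V [hU hV hc]]] := unwitnessed_children m hn.
have [x [he [hx0 hx] hxV]] := hu _ _ (filt_meet hU0 hU) (filt_join hV0 hV).
have [hxV0 hxV1] : ~ sval V0 x /\ ~ sval V x by split=> h; apply: hxV; [left|right].
case: (in_cone_split he) => [e|[i hi]]; first by apply: (hm x); [left|].
case: (leqP m i) => him; first by apply: (hm x); [right; exists i|].
exact: (hc i x him hi).
Qed.

Lemma filter_point_ideal q : filter_point q -> forall a, ~ sval a q <-> I a.
Proof.
move=> hq a; split=> h.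
  by apply: NNPP => hn; apply: h; case: (hq a Order.bottom hn filt_bot).
by case: (hq Order.top a filt_top (fun h' => h' h)).
Qed.

Lemma prime_ideal_point : exists q, forall a, ~ sval a q <-> I a.
Proof.
case: (classic (exists u, witnessed u /\ filter_point (inl u))) => [[u [_ hq]]|hn].
  by exists (inl u); apply: filter_point_ideal.
have [c hc] : {c : seq nat -> nat & forall u, witnessed u -> witnessed (rcons u (c u))}.
  apply: (choice (P := fun u i => witnessed u -> witnessed (rcons u i))) => u.
  case: (classic (witnessed u)) => hu; last by exists 0.
  case: (witnessed_step hu) => [hq|[i hi]]; last by exists i.
  by case: hn; exists u.
pose al j := c (choice_path c j).
have hpath k : witnessed (mkseq al k).
  by rewrite -choice_path_mkseq; elim: k => [|k ih] /=; [apply: witnessed_nil|apply: hc].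
exists (inr al); apply: filter_point_ideal => U V hU hV; split.
  apply: NNPP => hnu; have [_ [_ closedU]] := svalP U.
  have [m hm] := closedU _ hnu.
  have [x [he hx _]] := hpath m U Order.bottom hU filt_bot.
  exact: hm x he hx.
move=> hv; have [_ [openV _]] := svalP V.
have [m hm] := openV _ hv.
have [x [he _ hx]] := hpath m Order.top V filt_top hV.
exact: hx (hm x he).
Qed.
End PrimeIdealsArePoints.

Lemma representable_Q : representable leQ.
Proof.
apply: (@representable_of_mem _ _ _ CD (fun a => sval a)) => //.
- by move=> x.
- by move=> a x y; case: (svalP a) => hdown _; apply: hdown.
- move=> x y hxy; have [U [hU hy hx]] := separation hxy.
  by exists (exist _ U hU : CD); split.
- exact: leQ_anti.
- exact: prime_ideal_point.
Qed.

(* P is the order component of its root in Q: nodes are never comparable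
   with branches. *)
Lemma component_of_root : iso_to_component Ple leQ (inl [::]).
Proof.
exists inl; split=> //.
- by move=> s; apply: (same_component_map (f := inl)) (root_component s).
- move=> y hy; apply: (same_component_closed (S := fun x => exists s, inl s = x) _ hy).
    by move=> x [t|b] hc [s e]; [exists t|subst x; case: hc].
  by exists [::].
- by move=> s1 s2 [].
Qed.

Theorem lemma2p5 :
  (exists (Q : Type) (leQ : Q -> Q -> Prop) (q0 : Q),
      representable leQ /\ iso_to_component Ple leQ q0)
  /\ connected Ple.
Proof.
split; last exact: Ple_connected.
by exists Qt, leQ, (inl [::]); split; [apply: representable_Q|apply: component_of_root].
Qed.
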